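(* Let $m\le n$. Then every instance with $n$ agents with monotone valuations and $m$ goods has at least $\frac{n!}{(n-m)!}$ EFX allocations, and there exists an instance with $n$ agents with additive valuations and $m$ goods that has exactly $\frac{n!}{(n-m)!}$ EFX allocations. *)

From mathcomp Require Import all_boot all_order all_algebra.
Set Implicit Arguments. Unset Strict Implicit. Unset Printing Implicit Defensive.
Import Order.TTheory GRing.Theory Num.Theory.
Local Open Scope ring_scope.

Definition valuations (R : realFieldType) (n m : nat) :=
  'I_n -> {set 'I_m} -> R.

Definition monotone_vals (R : realFieldType) (n m : nat) (v : valuations R n m) :=
  forall (i : 'I_n) (S T : {set 'I_m}), S \subset T -> v i S <= v i T.

Definition additive_vals (R : realFieldType) (n m : nat) (v : valuations R n m) :=
  exists w : 'I_n -> 'I_m -> R,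
    (forall i g, 0 <= w i g) /\
    (forall i (S : {set 'I_m}), v i S = \sum_(g in S) w i g).

(* A (complete) allocation assigns every good to exactly one agent. *)
Definition allocation (n m : nat) := {ffun 'I_m -> 'I_n}.

Definition bundle (n m : nat) (A : allocation n m) (i : 'I_n) : {set 'I_m} :=
  [set g | A g == i].

Definition EFX (R : realFieldType) (n m : nat) (v : valuations R n m)
  (A : allocation n m) : bool :=
  [forall i : 'I_n, forall j : 'I_n, forall g : 'I_m,
     (g \in bundle A j) ==> (v i (bundle A j :\ g) <= v i (bundle A i))].

Definition num_EFX (R : realFieldType) (n m : nat) (v : valuations R n m) : nat :=
  #|[set A : allocation n m | EFX v A]|.

(* An allocation that gives every agent at most one good is EFX for monotone
   valuations: removing a good from a singleton bundle leaves the empty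
   bundle, which nobody values above their own.  When m <= n there are
   n!/(n-m)! such (injective) allocations.  For the valuation counting goods,
   nothing else is EFX: a non-injective allocation leaves some agent with
   nothing, and that agent envies a bundle of two goods even after one of
   them is removed. *)

From mathcomp Require Import all_boot all_order all_algebra.
Set Implicit Arguments. Unset Strict Implicit. Unset Printing Implicit Defensive.
Import Order.TTheory GRing.Theory Num.Theory.
Local Open Scope ring_scope.

Lemma in_bundle (n m : nat) (A : allocation n m) (i : 'I_n) (g : 'I_m) :
  (g \in bundle A i) = (A g == i).
Proof. by rewrite inE. Qed.

Lemma card_injective_allocations (n m : nat) : (m <= n)%N ->
  #|[set A : allocation n m | injectiveb A]| = (n`! %/ (n - m)`!)%N.
Proof. by move=> le_mn; rewrite card_inj_ffuns !card_ord ffact_factd. Qed.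

Lemma bundle_injective_setD1 (n m : nat) (A : allocation n m) (j : 'I_n)
    (g : 'I_m) :
  injective A -> g \in bundle A j -> bundle A j :\ g = set0.
Proof.
move=> injA; rewrite in_bundle => /eqP Agj; apply/setP=> h.
rewrite !inE; apply/negbTE/andP => -[/eqP neq_hg /eqP Ahj].
by apply: neq_hg; apply: injA; rewrite Ahj.
Qed.

Lemma injective_allocation_EFX (R : realFieldType) (n m : nat)
    (v : valuations R n m) (A : allocation n m) :
  monotone_vals v -> injective A -> EFX v A.
Proof.
move=> mon injA; apply/forallP=> i; apply/forallP=> j; apply/forallP=> g.
apply/implyP=> gj; rewrite bundle_injective_setD1 //.
exact/mon/sub0set.
Qed.

Lemma noninjective_allocation_empty_bundle (n m : nat) (A : allocation n m) :
  (m <= n)%N -> ~~ injectiveb A -> exists i : 'I_n, bundle A i = set0.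
Proof.
move=> le_mn ninjA.
have lt_codom_m : (#|codom A| < m)%N.
  rewrite ltn_neqAle -[X in (_ <= X)%N]card_ord leq_image_card andbT.
  apply: contra ninjA; rewrite -[X in _ == X]card_ord => /image_injP injA.
  by apply/injectiveP => x y; apply: injA.
have /subsetPn [i _ i_ncodom] : ~~ ([set: 'I_n] \subset codom A).
  apply: contraL lt_codom_m => /subset_leq_card.
  by rewrite cardsT card_ord -leqNgt => /(leq_trans le_mn).
exists i; apply/setP=> g; rewrite in_bundle inE.
by apply: contraNF i_ncodom => /eqP <-; apply: codom_f.
Qed.

Definition card_vals (R : realFieldType) (n m : nat) : valuations R n m :=
  fun _ S => (#|S|)%:R.
Arguments card_vals : clear implicits.

Lemma card_vals_additive (R : realFieldType) (n m : nat) :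
  additive_vals (card_vals R n m).
Proof. by exists (fun _ _ => 1); split=> // i S; rewrite sumr_const. Qed.

Lemma card_vals_monotone (R : realFieldType) (n m : nat) :
  monotone_vals (card_vals R n m).
Proof. by move=> i S T /subset_leq_card; rewrite ler_nat. Qed.

Lemma EFX_card_vals (R : realFieldType) (n m : nat) (A : allocation n m) :
  (m <= n)%N -> EFX (card_vals R n m) A = injectiveb A.
Proof.
move=> le_mn; apply/idP/idP => [|/injectiveP]; last first.
  exact/injective_allocation_EFX/card_vals_monotone.
apply: contraLR => ninjA.
have [i bundle_i0] := noninjective_allocation_empty_bundle le_mn ninjA.
have [x [y neq_xy Axy]] := injectivePn _ ninjA.
apply/forallP => /(_ i) /forallP /(_ (A x)) /forallP /(_ x).
rewrite in_bundle eqxx /= /card_vals bundle_i0 cards0 ler_nat leqn0.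
move=> /eqP /cards0_eq /setP /(_ y).
by rewrite !inE eq_sym neq_xy Axy eqxx.
Qed.

Theorem proposition3 (R : realFieldType) (n m : nat) :
  (m <= n)%N ->
  (forall v : valuations R n m, monotone_vals v ->
     (n`! %/ (n - m)`! <= num_EFX v)%N) /\
  (exists v : valuations R n m, additive_vals v /\
     num_EFX v = (n`! %/ (n - m)`!)%N).
Proof.
move=> le_mn; rewrite -card_injective_allocations //; split.
  move=> v mon; apply: subset_leq_card; apply/subsetP=> A.
  by rewrite !inE => /injectiveP /(injective_allocation_EFX mon).
exists (card_vals R n m); split; first exact: card_vals_additive.
by apply: eq_card => A; rewrite !inE EFX_card_vals.
Qed.
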